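(* The Leftmost and Median mechanisms have unbounded approximation ratio of the Nash welfare, while the MidOrNearest mechanism $2$-approximates the Nash welfare.
   Context: One facility is located on $[0,1]$; $n\ge1$ agents (any $n$) have locations $x_1\le\dots\le x_n$ in $[0,1]$. For a facility at $y$, agent $i$ has utility $u_i=1-|x_i-y|$. The Nash welfare is $\left(\prod_{i=1}^n u_i\right)^{1/n}$. The Leftmost mechanism locates the facility at $x_1$; the Median mechanism at $x_{\lceil n/2\rceil}$; the MidOrNearest mechanism at $x_n$ if $x_n<1/2$, at $1/2$ if $x_1\le1/2\le x_n$, and at $x_1$ if $x_1>1/2$. For a mechanism $M$, the approximation ratio of the Nash welfare is the supremum over all profiles $x$ (all numbers of agents) of $\mathrm{OPT}(x)/\mathrm{NW}(M(x))$, where $\mathrm{OPT}(x)$ is the maximum Nash welfare over facility locations in $[0,1]$ (the ratio is $+\infty$ if $\mathrm{NW}(M(x))=0$); $M$ ''$\alpha$-approximates'' the Nash welfare if this ratio equals $\alpha$. *)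

From HB Require Import structures.
From mathcomp Require Import all_boot all_order all_algebra.
From mathcomp Require Import all_classical all_reals.
From mathcomp Require Import ereal topology normedtype exp.
Set Implicit Arguments. Unset Strict Implicit. Unset Printing Implicit Defensive.
Import Order.TTheory GRing.Theory Num.Theory.
Local Open Scope classical_set_scope.
Local Open Scope ring_scope.

Section Defs.
Variable R : realType.

Definition profile (x : seq R) : Prop :=
  (0 < size x)%N /\ sorted <=%R x /\ (forall xi, xi \in x -> 0 <= xi <= 1).

Definition utility (xi y : R) : R := 1 - `|xi - y|.

Definition NW (x : seq R) (y : R) : R :=
  (\prod_(xi <- x) utility xi y) `^ ((size x)%:R^-1).

Definition OPT (x : seq R) : R := sup [set NW x y | y in `[0, 1]].

Definition mechanism := seq R -> R.

Definition Leftmost : mechanism := fun x => head 0 x.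
(* x_{ceil(n/2)} (1-indexed) = index (n-1)/2 (0-indexed). *)
Definition Median : mechanism := fun x => nth 0 x ((size x).-1./2).
Definition MidOrNearest : mechanism := fun x =>
  if last 0 x < 2^-1 then last 0 x
  else if head 0 x <= 2^-1 then 2^-1
  else head 0 x.

Definition ratio_at (M : mechanism) (x : seq R) : \bar R :=
  if NW x (M x) == 0 then +oo%E else ((OPT x / NW x (M x))%:E).

Definition approx_ratio (M : mechanism) : \bar R :=
  ereal_sup [set ratio_at M x | x in profile].

End Defs.

From HB Require Import structures.
From mathcomp Require Import all_boot all_order all_algebra.
From mathcomp Require Import all_classical all_reals.
From mathcomp Require Import ereal topology normedtype exp sequences.
From mathcomp Require Import lra.
Import Order.TTheory GRing.Theory Num.Theory.
Local Open Scope ring_scope.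

(* Every utility lies in [0, 1], hence so do the Nash welfare and OPT.
   The profile [0; 1] gives Nash welfare 0 at location 0, where Leftmost and
   Median both place the facility.  MidOrNearest keeps every agent within
   distance 1/2 of the facility, so its Nash welfare is at least 1/2 and its
   ratio at most 2.  Conversely, for m agents at 0 and one at 1/2,
   MidOrNearest picks 1/2 and the ratio is at least
   ((1/2) / (1/2)^m)^(1/(m+1)) = 2^((m-1)/(m+1)), which tends to 2. *)

Lemma path_le_head_last {d : Order.disp_t} {T : porderType d} (a : T) s :
  path <=%O a s -> forall t, t \in a :: s -> (a <= t <= last a s)%O.
Proof.
elim: s a => [|b s IH] a /=.
  by move=> _ t; rewrite inE => /eqP->; rewrite lexx.
move=> /andP[ab hp] t; rewrite inE => /orP[/eqP->|ht].
  have /andP[_ h] := IH b hp b (mem_head _ _).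
  by rewrite lexx (le_trans ab h).
have /andP[h1 h2] := IH b hp t ht.
by rewrite h2 (le_trans ab h1).
Qed.

Lemma powR_exprn_inv {R : realType} (a : R) n :
  0 <= a -> (0 < n)%N -> (a ^+ n) `^ n%:R^-1 = a.
Proof.
move=> a0 n0; rewrite -powR_mulrn // -powRrM divff ?powRr1 //.
by rewrite pnatr_eq0 -lt0n.
Qed.

Lemma exists_expr_lt {R : realType} (q e : R) :
  `|q| < 1 -> 0 < e -> exists n, q ^+ n < e.
Proof.
move=> q1 e0.
by have /(_ _)/filter_ex[n ?] := cvgr_lt 0 (cvg_expr q1) e e0; exists n.
Qed.

Lemma le_ereal_sup_EFin {R : realType} (S : set (\bar R)) (r : R) :
  (forall s, s < r -> exists2 e, S e & (s%:E < e)%E) -> (r%:E <= ereal_sup S)%E.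
Proof.
move=> hS; rewrite leNgt; apply/negP => hsup.
have [s hs hsr] : exists2 s, (ereal_sup S < s%:E)%E & s < r.
  move: hsup; case: (ereal_sup S) => [t||] //= htr.
  - by exists ((t + r) / 2); rewrite ?lte_fin; move: htr; rewrite lte_fin; lra.
  - by exists (r - 1); rewrite ?ltNye //; lra.
have [e Se se] := hS s hsr.
by have := lt_trans hs se; rewrite ltNge ereal_sup_ubound.
Qed.

Section NashWelfare.
Variable R : realType.
Implicit Types (x : seq R) (xi y c s : R).

Lemma utility_itv xi y : 0 <= xi <= 1 -> 0 <= y <= 1 -> 0 <= utility xi y <= 1.
Proof.
move=> /andP[? ?] /andP[? ?]; rewrite /utility.
by case: (lerP 0 (xi - y)) => h; [rewrite ger0_norm // | rewrite ltr0_norm //];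
  apply/andP; split; lra.
Qed.

Lemma NW_le1 x y : profile x -> 0 <= y <= 1 -> NW x y <= 1.
Proof.
move=> [_ [_ hx]] hy.
have hu xi : xi \in x -> 0 <= utility xi y <= 1 by move/hx/utility_itv; apply.
have p1 : \prod_(xi <- x) utility xi y <= 1.
  by rewrite big_seq prodr_ile1.
have p0 : 0 <= \prod_(xi <- x) utility xi y.
  by rewrite big_seq prodr_ge0 // => xi /hu /andP[].
have r0 : 0 <= (size x)%:R^-1 :> R by rewrite invr_ge0.
have := ge0_ler_powR r0 p0 ler01 p1.
by rewrite powR1; apply.
Qed.

Lemma NW_ge x y c : 0 <= c -> (0 < size x)%N ->
  (forall xi, xi \in x -> c <= utility xi y) -> c <= NW x y.
Proof.
move=> c0 x0 hc.
have hprod : c ^+ size x <= \prod_(xi <- x) utility xi y.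
  rewrite -[c ^+ _]iter_mulr_1 -count_predT -big_const_seq big_seq.
  by rewrite [leRHS]big_seq ler_prod // => xi /hc ->; rewrite c0.
have cn0 : 0 <= c ^+ size x by exact: exprn_ge0.
rewrite -{1}(powR_exprn_inv _ _ c0 x0) ge0_ler_powR ?nnegrE ?invr_ge0 ?ler0n //.
exact: le_trans hprod.
Qed.

Lemma OPT_le1 x : profile x -> OPT x <= 1.
Proof.
move=> px; apply: ge_sup.
  by exists (NW x 0), 0 => //=; rewrite in_itv /= lexx ler01.
by move=> _ [y hy <-]; apply: NW_le1; move: hy; rewrite /= in_itv.
Qed.

Lemma NW_le_OPT x y : profile x -> 0 <= y <= 1 -> NW x y <= OPT x.
Proof.
move=> px hy; apply: ub_le_sup; last by exists y; rewrite //= in_itv.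
by exists 1 => _ [w hw <-]; apply: NW_le1; move: hw; rewrite /= in_itv.
Qed.

Lemma approx_ratio_eqy (M : mechanism R) x :
  profile x -> NW x (M x) = 0 -> approx_ratio M = +oo%E.
Proof.
move=> px hM; apply/eqP; rewrite eq_le leey /=.
by apply: ereal_sup_ubound; exists x; rewrite // /ratio_at hM eqxx.
Qed.

Lemma profile01 : profile [:: 0; 1 : R].
Proof.
split => //; split; first by rewrite /= ler01.
by move=> xi; rewrite !inE => /orP[] /eqP->; rewrite lexx ler01.
Qed.

Lemma NW01_0 : NW [:: 0; 1 : R] 0 = 0.
Proof.
have u10 : utility 1 0 = 0 :> R by rewrite /utility subr0 normr1 subrr.
by rewrite /NW !big_cons u10 mul0r mulr0 powR0 // invr_eq0 pnatr_eq0.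
Qed.

Lemma utility_MidOrNearest_ge x xi : profile x -> xi \in x ->
  2^-1 <= utility xi (MidOrNearest x).
Proof.
case: x => [|a s] [//= _ [so hx]] hxi.
have /andP[ha hl] := path_le_head_last _ _ so _ hxi.
have /andP[? ?] := hx xi hxi; rewrite /MidOrNearest /utility /=.
case: ifPn => hlast; first by rewrite ler0_norm ?subr_le0 //; lra.
rewrite -leNgt in hlast; case: ifPn => hhead.
  by case: (lerP 0 (xi - 2^-1)) => h;
    [rewrite ger0_norm // | rewrite ltr0_norm //]; lra.
by rewrite -ltNge in hhead; rewrite ger0_norm ?subr_ge0 //; lra.
Qed.

Lemma ratio_MidOrNearest_le2 x : profile x -> (ratio_at (@MidOrNearest R) x <= 2%:E)%E.
Proof.
move=> px; have [x0 _] := px.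
have hN : 2^-1 <= NW x (MidOrNearest x).
  by apply: NW_ge => // xi; exact: utility_MidOrNearest_ge.
have hN0 : 0 < NW x (MidOrNearest x) by apply: lt_le_trans hN; rewrite invr_gt0 ltr0n.
have := OPT_le1 _ px.
by rewrite /ratio_at (gt_eqF hN0) lee_fin ler_pdivrMr //; lra.
Qed.

Definition zeros_half m : seq R := rcons (nseq m 0) (2^-1).

Lemma profile_zeros_half m : profile (zeros_half m).
Proof.
split; first by rewrite size_rcons.
split.
  by elim: m => [|[|m] IH] //=; rewrite ?lexx // andbT invr_ge0 ler0n.
move=> xi; rewrite mem_rcons inE => /orP[/eqP->|/nseqP[-> _]].
  by rewrite invr_ge0 ler0n /=; lra.
by rewrite lexx ler01.
Qed.

Lemma MidOrNearest_zeros_half m : MidOrNearest (zeros_half m) = 2^-1.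
Proof.
rewrite /MidOrNearest /zeros_half last_rcons ltxx.
by case: m => [|m] /=; rewrite ?lexx ?invr_ge0 ?ler0n.
Qed.

Lemma NW_zeros_half m y : NW (zeros_half m) y =
  (utility 0 y ^+ m * utility (2^-1) y) `^ (m.+1%:R^-1).
Proof.
rewrite /NW /zeros_half size_rcons size_nseq -cats1 big_cat big_nseq big_seq1.
by rewrite /= iter_mulr_1.
Qed.

(* s^(m+1) (1/2)^m = s (s/2)^m < 2 (1/4) = 1/2, then take (m+1)-th roots. *)
Lemma NW_zeros_half_gap s m : 0 <= s < 2 -> (s / 2) ^+ m < 4^-1 ->
  s * NW (zeros_half m) (2^-1) < NW (zeros_half m) 0.
Proof.
move=> /andP[s0 s2] hm.
have uh0 : utility (2^-1) 0 = 2^-1 :> R by rewrite /utility subr0 ger0_norm; lra.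
have u0h : utility 0 (2^-1) = 2^-1 :> R by rewrite /utility sub0r normrN ger0_norm; lra.
rewrite !NW_zeros_half uh0 u0h /utility !subrr normr0 subr0 expr1n mul1r mulr1.
rewrite -{1}(powR_exprn_inv _ _ s0 (ltn0Sn m)) -powRM ?exprn_ge0 ?invr_ge0 ?ler0n //.
rewrite gt0_ltr_powR ?nnegrE ?mulr_ge0 ?exprn_ge0 ?invr_ge0 ?ler0n //; try lra.
rewrite exprS -mulrA -exprMn -/(s / 2).
have : 0 <= (s / 2) ^+ m by rewrite exprn_ge0 //; lra.
move: hm; set Q := (s / 2) ^+ m => hm Q0.
have : 0 <= (2 - s) * Q by rewrite mulr_ge0 //; lra.
nra.
Qed.

Lemma ratio_MidOrNearest_gt s : s < 2 ->
  exists2 e, [set ratio_at (@MidOrNearest R) x | x in @profile R]%classic e & (s%:E < e)%E.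
Proof.
move=> s2; pose s' := Num.max s 0.
have hs' : 0 <= s' < 2 by rewrite le_max lexx orbT /= gt_max s2; lra.
have [m hm] : exists m, (s' / 2) ^+ m < 4^-1.
  by apply: exists_expr_lt; rewrite ?invr_gt0 ?ltr0n // ger0_norm; lra.
have NWh0 : 0 < NW (zeros_half m) (2^-1).
  rewrite NW_zeros_half powR_gt0 // /utility subrr sub0r normrN normr0 subr0 mulr1.
  by rewrite exprn_gt0 // ger0_norm; lra.
exists (ratio_at (@MidOrNearest R) (zeros_half m)).
  by exists (zeros_half m) => //; exact: profile_zeros_half.
rewrite /ratio_at MidOrNearest_zeros_half (gt_eqF NWh0).
rewrite (le_lt_trans (_ : _ <= s'%:E)%E) ?lee_fin ?le_max ?lexx // lte_fin ltr_pdivlMr //.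
apply: (lt_le_trans (NW_zeros_half_gap _ _ hs' hm)).
by apply: (NW_le_OPT _ _ (profile_zeros_half m)); rewrite lexx ler01.
Qed.

Lemma approx_ratio_MidOrNearest : approx_ratio (@MidOrNearest R) = 2%:E.
Proof.
apply/eqP; rewrite eq_le; apply/andP; split.
  by apply/ereal_supP => _ [x px <-]; exact: ratio_MidOrNearest_le2.
exact/le_ereal_sup_EFin/ratio_MidOrNearest_gt.
Qed.

End NashWelfare.

Theorem theorem11 (R : realType) :
  approx_ratio (@Leftmost R) = +oo%E /\
  approx_ratio (@Median R) = +oo%E /\
  approx_ratio (@MidOrNearest R) = 2%:E.
Proof.
split; first exact: approx_ratio_eqy (@profile01 R) (@NW01_0 R).
split; first exact: approx_ratio_eqy (@profile01 R) (@NW01_0 R).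
exact: approx_ratio_MidOrNearest.
Qed.
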